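(* Let $n\geq4$ and let $U,V$ be monomials. Then $U,V\in F(J(P_{n-2})^2)$ if and only if $x_{n-1}^2U,\,x_{n-1}^2V\in F(J(P_n)^2)$. Moreover, in that case $U>_{\mathcal R}V$ (rooted order on $F(J(P_{n-2})^2)$) if and only if $x_{n-1}^2U>_{\mathcal R}x_{n-1}^2V$ (rooted order on $F(J(P_n)^2)$).
   Context: Let $K$ be a field. For $m\geq 1$, $P_m$ is the path graph on vertices $x_1,\ldots,x_m$ with edges $\{x_i,x_{i+1}\}$. The cover ideal $J(P_m)$ is generated by the monomials $\prod_{x\in C}x$ with $C$ a minimal vertex cover of $P_m$. For a monomial ideal $I$, $G(I)$ is its set of minimal monomial generators and $F(I^2)=\{uv:u,v\in G(I)\}$. The rooted list $\mathcal R(P_m)$ is defined recursively: $\mathcal R(P_1)$ empty; $\mathcal R(P_2)=x_1,x_2$; $\mathcal R(P_3)=x_2,x_1x_3$; $\mathcal R(P_4)=x_1x_3,x_2x_3,x_2x_4$; for $m\geq5$, if $\mathcal R(P_{m-2})=u_1,\ldots,u_r$ and $\mathcal R(P_{m-3})=v_1,\ldots,v_s$, then $\mathcal R(P_m)=x_{m-1}u_1,\ldots,x_{m-1}u_r,x_mx_{m-2}v_1,\ldots,x_mx_{m-2}v_s$; it lists each element of $G(J(P_m))$ once. With $\mathcal R(P_m)=u_1,\ldots,u_q$, each $M\in F(J(P_m)^2)$ can be written $u_1^{a_1}\cdots u_q^{a_q}$ with $a_i\geq0$, $\sum a_i=2$; the maximal expression of $M$ is the one with lexicographically largest exponent vector.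 The rooted order on $F(J(P_m)^2)$: $M>_{\mathcal R}N$ iff the exponent vector of the maximal expression of $M$ is lexicographically larger than that of $N$. *)

From mathcomp Require Import all_boot.
Set Implicit Arguments. Unset Strict Implicit. Unset Printing Implicit Defensive.

(* A monomial in the variables x_1, x_2, ... is represented by its exponent
   function: (M i) is the exponent of x_i.  Index 0 is unused (a genuine
   monomial in x_1,x_2,... has M 0 = 0). *)
Definition mon := nat -> nat.

Definition is_monomial (M : mon) : Prop :=
  M 0 = 0 /\ exists N, forall i, N < i -> M i = 0.

Definition meq (M N : mon) : Prop := forall i, M i = N i.

Definition mone : mon := fun _ => 0.
Definition mmul (M N : mon) : mon := fun i => M i + N i.
Definition xv (k : nat) : mon := fun i => nat_of_bool (i == k).

(* Vertex covers of the path P_m on x_1..x_m, edges {x_i, x_{i+1}}. *)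
Definition in_range (m : nat) (C : nat -> bool) : Prop :=
  forall i, C i -> (1 <= i <= m).
Definition is_cover (m : nat) (C : nat -> bool) : Prop :=
  forall i, 1 <= i -> i < m -> C i || C i.+1.
Definition min_cover (m : nat) (C : nat -> bool) : Prop :=
  [/\ in_range m C, is_cover m C &
      forall C' : nat -> bool, in_range m C' -> is_cover m C' ->
        (forall i, C' i -> C i) -> forall i, C i -> C' i].

Definition cover_mon (C : nat -> bool) : mon := fun i => nat_of_bool (C i).

Definition inG (m : nat) (u : mon) : Prop :=
  exists C, min_cover m C /\ meq u (cover_mon C).

Definition inF2 (m : nat) (M : mon) : Prop :=
  exists u v, [/\ inG m u, inG m v & meq M (mmul u v)].

Fixpoint rooted (m : nat) : seq mon :=
  match m with
  | 0 => [::]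
  | 1 => [::]
  | 2 => [:: xv 1; xv 2]
  | 3 => [:: xv 2; mmul (xv 1) (xv 3)]
  | 4 => [:: mmul (xv 1) (xv 3); mmul (xv 2) (xv 3); mmul (xv 2) (xv 4)]
  | S (S ((S ((S (S p)) as y)) as x)) =>
      (* here m = p+5, x = m-2, y = m-3 *)
      [seq mmul (xv p.+4) u | u <- rooted x] ++
      [seq mmul (mmul (xv p.+4.+1) (xv p.+3)) v | v <- rooted y]
  end.

Definition mexpr (R : seq mon) (a : seq nat) : mon :=
  fun j => \sum_(i < size R) nth 0 a i * (nth mone R i) j.

Definition is_expr (m : nat) (M : mon) (a : seq nat) : Prop :=
  [/\ size a = size (rooted m), sumn a = 2 & meq M (mexpr (rooted m) a)].

Fixpoint lexlt (a b : seq nat) : bool :=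
  match a, b with
  | x :: a', y :: b' => (x < y) || ((x == y) && lexlt a' b')
  | _, _ => false
  end.
Definition lexle (a b : seq nat) : bool := (a == b) || lexlt a b.

Definition is_max_expr (m : nat) (M : mon) (a : seq nat) : Prop :=
  is_expr m M a /\ forall b, is_expr m M b -> lexle b a.

Definition rgt (m : nat) (M N : mon) : Prop :=
  exists a b, [/\ is_max_expr m M a, is_max_expr m N b & lexlt b a].

From mathcomp Require Import all_boot zify.

Set Implicit Arguments.
Unset Strict Implicit.
Unset Printing Implicit Defensive.

(* On the cover side, C |-> C u {x_(n-1)} is a bijection from the minimal
   vertex covers of P_(n-2) onto the minimal vertex covers of P_n containing
   x_(n-1); since every generator of J(P_n) is squarefree, a product of two of
   them is divisible by x_(n-1)^2 only if both factors contain x_(n-1).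

   On the order side, R(P_n) starts with the block x_(n-1) R(P_(n-2)), and no
   later entry, nor any entry of R(P_(n-2)), involves x_(n-1).  Comparing
   x_(n-1)-degrees, every expression of x_(n-1)^2 U over R(P_n) uses only the
   first block, so the expressions of x_(n-1)^2 U are exactly the expressions
   of U padded with zeros, and padding by a common suffix preserves the
   lexicographic order. *)

Definition xsq n (U : mon) : mon := mmul (mmul (xv n.-1) (xv n.-1)) U.

Lemma xv_neq k j : k != j -> xv k j = 0.
Proof. by rewrite /xv eq_sym => /negbTE ->. Qed.

Lemma xv_gt k j : k < j -> xv k j = 0.
Proof. by move=> ltkj; apply: xv_neq; rewrite neq_ltn ltkj. Qed.

Definition irredundant_cover m (C : nat -> bool) :=
  [/\ in_range m C, is_cover m C &
  forall i, C i -> ((1 < i) && ~~ C i.-1) || ((i < m) && ~~ C i.+1)].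

Lemma min_coverP m C : min_cover m C <-> irredundant_cover m C.
Proof.
split.
- case=> C_range C_cover C_min; split => // i Ci.
  apply/negPn/negP => /negP C_redundant.
  pose C' k := C k && (k != i).
  have C'_range : in_range m C' by move=> k /andP[/C_range].
  have C'_cover : is_cover m C'.
    move=> k k_ge1 k_lt; have := C_cover k k_ge1 k_lt; rewrite /C'.
    case: (eqVneq k i) => [eq_ki|_].
      subst k; have -> : C i.+1.
        by apply/negPn/negP => nC; apply: C_redundant; rewrite k_lt nC orbT.
      by rewrite andbF eqn_leq ltnn.
    case: (eqVneq k.+1 i) => [eq_ki|_]; last by rewrite !andbT.
    subst i; have -> // : C k.
    by apply/negPn/negP => nC; apply: C_redundant; rewrite /= ltnS k_ge1 nC.
  have := C_min C' C'_range C'_cover (fun k C'k => proj1 (andP C'k)) i Ci.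
  by rewrite /C' eqxx andbF.
- case=> C_range C_cover C_irr; split => // C' C'_range C'_cover C'_sub i Ci.
  apply/negPn/negP => C'i.
  have /andP[i_ge1 i_le] := C_range i Ci.
  have nC' k : ~~ C k -> C' k = false.
    by move=> nCk; apply/negP => /C'_sub; apply/negP.
  case/orP: (C_irr i Ci) => /andP[i_bd nCk].
  + have pred_i_ge1 : 1 <= i.-1 by rewrite -ltnS prednK ?(ltnW i_bd).
    have := C'_cover i.-1 pred_i_ge1.
    by rewrite prednK ?(ltnW i_bd) // i_le (nC' _ nCk) (negbTE C'i) => /(_ isT).
  + by have := C'_cover i i_ge1 i_bd; rewrite (nC' _ nCk) (negbTE C'i).
Qed.

Lemma in_range_out m C i : in_range m C -> (i == 0) || (m < i) -> C i = false.
Proof. by move=> C_range i_out; apply/negP => /C_range; lia. Qed.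

Lemma min_cover_add n C : 2 <= n -> min_cover (n - 2) C ->
  min_cover n (fun i => C i || (i == n.-1)).
Proof.
move=> n_ge2 /min_coverP[C_range C_cover C_irr]; apply/min_coverP; split.
- by move=> i /orP[/C_range|/eqP->]; lia.
- move=> i i_ge1 i_lt; case: (ltnP i (n - 2)) => i_bd.
    by case/orP: (C_cover i i_ge1 i_bd) => ->; rewrite ?orbT.
  case: (eqVneq i n.-1) => [_|i_neq]; first by rewrite orbT.
  have succ_eq : i.+1 == n.-1 by lia.
  by rewrite succ_eq !orbT.
- move=> i /orP[Ci | /eqP->].
  + have /andP[i_ge1 i_le] := C_range i Ci.
    case/orP: (C_irr i Ci) => /andP[i_bd nC].
    * have pred_neq : (i.-1 == n.-1) = false by lia.
      by rewrite i_bd pred_neq (negbTE nC).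
    * have succ_neq : (i.+1 == n.-1) = false by lia.
      have i_lt : i < n by lia.
      by rewrite succ_neq (negbTE nC) i_lt orbT.
  + have nCn : C n.-1.+1 = false by apply: in_range_out C_range _; lia.
    have succ_neq : (n.-1.+1 == n.-1) = false by lia.
    have pred_lt : n.-1 < n by lia.
    by rewrite nCn succ_neq pred_lt orbT.
Qed.

Lemma min_cover_drop n C : 2 <= n -> min_cover n C -> C n.-1 ->
  min_cover (n - 2) (fun i => C i && (i < n.-1)) /\
  forall i, C i = (C i && (i < n.-1)) || (i == n.-1).
Proof.
move=> n_ge2 /min_coverP[C_range C_cover C_irr] Cn1.
have nCn : C n = false.
  by apply/negP => /C_irr; rewrite ltnn Cn1 /= andbF.
split.
- apply/min_coverP; split.
  + by move=> i /andP[/C_range]; lia.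
  + move=> i i_ge1 i_lt; have := C_cover i i_ge1 (leq_trans i_lt (leq_subr _ _)).
    have i_lt' : i < n.-1 by lia.
    have succ_lt : i.+1 < n.-1 by lia.
    by rewrite i_lt' succ_lt !andbT.
  + move=> i /andP[Ci i_lt]; case/orP: (C_irr i Ci) => /andP[i_bd nC].
    * by rewrite i_bd !negb_and nC.
    * have succ_neq : i.+1 != n.-1 by apply: contraNneq nC => ->.
      have i_lt' : i < n - 2 by lia.
      by rewrite i_lt' !negb_and nC orbT.
- move=> i; case: (ltnP i n.-1) => [i_lt|i_ge].
    by rewrite andbT (ltn_eqF i_lt) orbF.
  rewrite andbF /=; case: (eqVneq i n.-1) => [-> //|i_neq].
  have [-> //|i_neq'] := eqVneq i n.
  by apply: in_range_out C_range _; lia.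
Qed.

Lemma inG_le1 m u i : inG m u -> u i <= 1.
Proof. by case=> C [_ ->]; apply: leq_b1. Qed.

Lemma inG_add n u : 2 <= n -> inG (n - 2) u -> inG n (mmul (xv n.-1) u).
Proof.
move=> n_ge2 [C [C_min eq_u]].
exists (fun i => C i || (i == n.-1)); split; first exact: min_cover_add.
move=> i; rewrite /mmul eq_u /cover_mon /xv.
case: (eqVneq i n.-1) => [->|_]; last by rewrite orbF.
by rewrite (@in_range_out (n - 2) C) //; [case: C_min | lia].
Qed.

Lemma inG_drop n u : 2 <= n -> inG n u -> u n.-1 = 1 ->
  exists2 u', inG (n - 2) u' & meq u (mmul (xv n.-1) u').
Proof.
move=> n_ge2 [C [C_min eq_u]]; rewrite eq_u /cover_mon; case Cn1: (C n.-1) => // _.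
have [C'_min eq_C] := min_cover_drop n_ge2 C_min Cn1.
exists (cover_mon (fun i => C i && (i < n.-1))).
  by exists (fun i => C i && (i < n.-1)).
move=> i; rewrite eq_u /cover_mon /mmul /xv {1}eq_C.
by case: (eqVneq i n.-1) => [->|_]; rewrite ?ltnn ?andbF ?orbF.
Qed.

Lemma inF2_xsq n U : 2 <= n -> inF2 (n - 2) U <-> inF2 n (xsq n U).
Proof.
move=> n_ge2; split.
- case=> u [v [u_gen v_gen eq_U]].
  exists (mmul (xv n.-1) u), (mmul (xv n.-1) v).
  split; try exact: inG_add.
  by move=> i; rewrite /xsq /mmul eq_U /mmul; lia.
- case=> u [v [u_gen v_gen eq_U]].
  have := eq_U n.-1; rewrite /xsq /mmul /xv eqxx /= => deg_eq.
  have u_le := inG_le1 n.-1 u_gen; have v_le := inG_le1 n.-1 v_gen.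
  have [|u' u'_gen eq_u] := inG_drop n_ge2 u_gen; first by lia.
  have [|v' v'_gen eq_v] := inG_drop n_ge2 v_gen; first by lia.
  exists u', v'; split => // i; have := eq_U i.
  by rewrite /xsq /mmul eq_u eq_v /mmul; lia.
Qed.

Lemma mexpr_nil a j : mexpr [::] a j = 0.
Proof. by rewrite /mexpr big_ord0. Qed.

Lemma mexpr_cons u R a j :
  mexpr (u :: R) a j = nth 0 a 0 * u j + mexpr R (behead a) j.
Proof.
rewrite /mexpr /= big_ord_recl /=; congr (_ + _).
by apply: eq_bigr => i _; case: a => [|x a] /=; rewrite ?nth_nil.
Qed.

Lemma mexpr_cat R1 R2 a j :
  mexpr (R1 ++ R2) a j = mexpr R1 a j + mexpr R2 (drop (size R1) a) j.
Proof.
elim: R1 a => [|u R1 IH] a /=; first by rewrite mexpr_nil drop0.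
by rewrite !mexpr_cons IH -addnA; case: a.
Qed.

Lemma mexpr_map_mmul w R a j :
  mexpr [seq mmul w u | u <- R] a j = w j * sumn (take (size R) a) + mexpr R a j.
Proof.
elim: R a => [|u R IH] a /=; first by rewrite !mexpr_nil take0 muln0.
by rewrite !mexpr_cons IH /mmul; case: a => [|x a] /=; lia.
Qed.

Lemma mexpr_take R a j : mexpr R a j = mexpr R (take (size R) a) j.
Proof.
elim: R a => [|u R IH] a /=; first by rewrite !mexpr_nil.
by rewrite !mexpr_cons IH; case: a.
Qed.

Lemma mexpr_nseq0 R k j : mexpr R (nseq k 0) j = 0.
Proof. by rewrite /mexpr big1 // => i _; rewrite nth_nseq if_same. Qed.

Lemma rooted_rec p : rooted p.+4.+1 =
  [seq mmul (xv p.+4) u | u <- rooted p.+3] ++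
  [seq mmul (mmul (xv p.+4.+1) (xv p.+3)) v | v <- rooted p.+2].
Proof. by []. Qed.

Lemma mexpr_rooted_gt m a j : m < j -> mexpr (rooted m) a j = 0.
Proof.
elim/ltn_ind: m a j => -[|[|[|[|[|p]]]]] IH a j ltmj.
- by rewrite mexpr_nil.
- by rewrite mexpr_nil.
- by rewrite !mexpr_cons mexpr_nil !xv_gt //; lia.
- by rewrite !mexpr_cons mexpr_nil /mmul !xv_gt //; lia.
- by rewrite !mexpr_cons mexpr_nil /mmul !xv_gt //; lia.
rewrite rooted_rec mexpr_cat !mexpr_map_mmul /mmul !xv_gt ?IH //; lia.
Qed.

(* For n = 4 the first block is x_3 R(P_2) only up to the order of the
   factors x_1 x_3 and x_2 x_3, hence the formulation through [mexpr]. *)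
Lemma rooted_split n : 4 <= n -> exists R1 T, [/\ rooted n = R1 ++ T,
  size R1 = size (rooted (n - 2)),
  forall a j, mexpr R1 a j =
    xv n.-1 j * sumn (take (size (rooted (n - 2))) a) + mexpr (rooted (n - 2)) a j
  & forall a, mexpr T a n.-1 = 0].
Proof.
case: n => [|[|[|[|[|p]]]]] // _.
- exists [:: mmul (xv 1) (xv 3); mmul (xv 2) (xv 3)], [:: mmul (xv 2) (xv 4)].
  split => // [a j|a]; rewrite !mexpr_cons !mexpr_nil /mmul; last by rewrite /xv muln0.
  by case: a => [|x [|y a]]; rewrite /= ?take0 /=; nia.
- rewrite rooted_rec; eexists; eexists; split; first reflexivity.
  + by rewrite size_map.
  + by move=> a j; rewrite mexpr_map_mmul.
  + by move=> a; rewrite mexpr_map_mmul /mmul !xv_neq ?mexpr_rooted_gt //; lia.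
Qed.

Lemma lexlt_irr s : lexlt s s = false.
Proof. by elim: s => //= x s ->; rewrite ltnn eqxx. Qed.

Lemma lexlt_catr a b z : size a = size b -> lexlt (a ++ z) (b ++ z) = lexlt a b.
Proof.
elim: a b => [|x a IH] [|y b] //=; first by rewrite lexlt_irr.
by case=> /IH ->.
Qed.

Lemma lexle_catr a b z : size a = size b -> lexle (a ++ z) (b ++ z) = lexle a b.
Proof. by move=> eq_sz; rewrite /lexle eqseq_cat // eqxx andbT lexlt_catr. Qed.

Lemma size_is_expr m M a : is_expr m M a -> size a = size (rooted m).
Proof. by case. Qed.

Section FirstBlock.

Variables (n : nat) (R1 T : seq mon).
Hypothesis n_ge2 : 2 <= n.
Hypothesis rootedE : rooted n = R1 ++ T.
Hypothesis size_R1 : size R1 = size (rooted (n - 2)).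
Hypothesis mexpr_R1 : forall a j, mexpr R1 a j =
  xv n.-1 j * sumn (take (size (rooted (n - 2))) a) + mexpr (rooted (n - 2)) a j.
Hypothesis mexpr_T : forall a, mexpr T a n.-1 = 0.

Local Notation r := (size (rooted (n - 2))).
Local Notation pad a := (a ++ nseq (size T) 0).

Lemma is_expr_pad U a : is_expr (n - 2) U a -> is_expr n (xsq n U) (pad a).
Proof.
case=> size_a sum_a eqU; split.
- by rewrite rootedE !size_cat size_nseq size_R1 size_a.
- by rewrite sumn_cat sumn_nseq mul0n addn0.
- move=> j; rewrite rootedE mexpr_cat size_R1 mexpr_R1 -size_a drop_size_cat //.
  rewrite mexpr_nseq0 take_size_cat // mexpr_take -size_a take_size_cat //.
  by rewrite /xsq /mmul eqU sum_a; lia.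
Qed.

Lemma is_expr_xsq U c :
  is_expr n (xsq n U) c -> c = pad (take r c) /\ is_expr (n - 2) U (take r c).
Proof.
case=> size_c sum_c eqU.
have size_c' : size c = r + size T by rewrite size_c rootedE size_cat size_R1.
have {}eqU j : xsq n U j =
    xv n.-1 j * sumn (take r c) + mexpr (rooted (n - 2)) c j + mexpr T (drop r c) j.
  by rewrite eqU rootedE mexpr_cat size_R1 mexpr_R1.
have sum_c' : sumn (take r c) + sumn (drop r c) = 2.
  by rewrite -sumn_cat cat_take_drop.
have sum_take : sumn (take r c) = 2.
  have := eqU n.-1; rewrite mexpr_T mexpr_rooted_gt /xsq /mmul /xv ?eqxx /=; lia.
have drop_c : drop r c = nseq (size T) 0.
  have /natnseq0P -> : sumn (drop r c) == 0 by apply/eqP; lia.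
  by rewrite size_drop size_c' addKn.
split; first by rewrite -drop_c cat_take_drop.
split => //; first by rewrite size_takel // size_c' leq_addr.
move=> j; have := eqU j.
by rewrite drop_c mexpr_nseq0 sum_take (mexpr_take _ c) /xsq /mmul; lia.
Qed.

Lemma is_max_expr_pad U a :
  is_max_expr (n - 2) U a -> is_max_expr n (xsq n U) (pad a).
Proof.
case=> ea a_max; split; first exact: is_expr_pad.
move=> b /is_expr_xsq [b_pad eb]; rewrite b_pad lexle_catr ?a_max //.
by rewrite (size_is_expr ea) (size_is_expr eb).
Qed.

Lemma is_max_expr_xsq U c : is_max_expr n (xsq n U) c ->
  c = pad (take r c) /\ is_max_expr (n - 2) U (take r c).
Proof.
case=> ec c_max; have [c_pad ec'] := is_expr_xsq ec; split => //.
split => // b eb; have := c_max _ (is_expr_pad eb).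
by rewrite {1}c_pad lexle_catr // (size_is_expr eb) (size_is_expr ec').
Qed.

Lemma rgt_xsq U V : rgt (n - 2) U V <-> rgt n (xsq n U) (xsq n V).
Proof.
split.
- case=> a [b [ma mb ltba]].
  exists (pad a), (pad b); split; try exact: is_max_expr_pad.
  by rewrite lexlt_catr // (size_is_expr ma.1) (size_is_expr mb.1).
- case=> c [d [mc md ltdc]].
  have [c_pad mc'] := is_max_expr_xsq mc; have [d_pad md'] := is_max_expr_xsq md.
  exists (take r c), (take r d); split => //.
  by rewrite c_pad d_pad lexlt_catr ?(size_is_expr mc'.1) ?(size_is_expr md'.1) in ltdc.
Qed.

End FirstBlock.

Theorem lemma3p3 (n : nat) (U V : mon) :
  4 <= n -> is_monomial U -> is_monomial V ->
  ((inF2 (n - 2) U /\ inF2 (n - 2) V) <->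
   (inF2 n (mmul (mmul (xv n.-1) (xv n.-1)) U) /\
    inF2 n (mmul (mmul (xv n.-1) (xv n.-1)) V))) /\
  (inF2 (n - 2) U -> inF2 (n - 2) V ->
   (rgt (n - 2) U V <->
    rgt n (mmul (mmul (xv n.-1) (xv n.-1)) U) (mmul (mmul (xv n.-1) (xv n.-1)) V))).
Proof.
move=> n_ge4 _ _; have n_ge2 : 2 <= n by apply: leq_trans n_ge4.
split.
  have := inF2_xsq U n_ge2; have := inF2_xsq V n_ge2; rewrite /xsq; tauto.
move=> _ _; have [R1 [T [rootedE size_R1 mexpr_R1 mexpr_T]]] := rooted_split n_ge4.
exact: (rgt_xsq n_ge2 rootedE size_R1 mexpr_R1 mexpr_T).
Qed.
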